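(* Let $\rho_{AE}\in\mathcal S(AE)$ with $A=A_1\otimes A_2$, let $\{U_1,\dots,U_L\}$ be unitaries on $A$ with corresponding measurements $\mathcal M^j_{A\to K_1}(\cdot)=\mathcal I_{A_1\to K_1}(\mathcal T_{A\to A_1}(U_j\cdot U_j^\dagger))$, and suppose \[ \frac1L\sum_{j=1}^L\Bigl\|\mathcal M^j_{A\to K_1}(\rho_{AE})-\frac{\mathbb I_{K_1}}{|K_1|}\otimes\rho_E\Bigr\|_1\le\varepsilon(\rho) \] for some number $\varepsilon(\rho)$. Then $H_{\min}^{\sqrt{2\varepsilon(\rho)}}(K_1|EJ)_\rho\ge\log|K_1|$, where $\rho_{K_1EJ}=\frac1L\sum_{j=1}^L\mathcal M^j_{A\to K_1}(\rho_{AE})\otimes|j\rangle\langle j|_J$.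
   Context: All Hilbert spaces are finite-dimensional; $\log$ is base 2; $\mathcal S$ density operators, $\mathcal S_{\le}$ positive operators of trace $\le1$. Fix computational bases $\{|a_1\rangle\}$ of $A_1$, $\{|a_2\rangle\}$ of $A_2$; $\mathcal T_{A\to A_1}(X)=\sum_{a_1,a_2}\langle a_1a_2|X|a_1a_2\rangle|a_1\rangle\langle a_1|$ (applied as $\mathcal T\otimes\mathrm{id}_E$); $K_1$ is a copy of $A_1$ and $\mathcal I_{A_1\to K_1}$ the identity relabeling $|a_1\rangle\langle a_1'|\mapsto|a_1\rangle\langle a_1'|$; $J$ is a classical register with orthonormal basis $\{|j\rangle\}_{j=1}^L$. For $\rho_{AB}\in\mathcal S_{\le}(AB)$, $\sigma_B\in\mathcal S(B)$: $H_{\min}(A|B)_{\rho|\sigma}=\max\{\lambda:2^{-\lambda}\mathbb I_A\otimes\sigma_B\ge\rho_{AB}\}$, $H_{\min}(A|B)_\rho=\max_{\sigma_B}H_{\min}(A|B)_{\rho|\sigma}$; $\bar F(\rho,\sigma)=\|\sqrt\rho\sqrt\sigma\|_1+\sqrt{(1-\mathrm{tr}\rho)(1-\mathrm{tr}\sigma)}$, $P=\sqrt{1-\bar F^2}$, $H^\varepsilon_{\min}(A|B)_\rho=\max\{H_{\min}(A|B)_{\tilde\rho}:\tilde\rho_{AB}\in\mathcal S_{\le}(AB),P(\rho_{AB},\tilde\rho_{AB})\le\varepsilon\}$. *)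

From HB Require Import structures.
From mathcomp Require Import all_boot all_order all_algebra.
From mathcomp Require Import complex mxtens.
From mathcomp Require Import all_classical all_reals.
From mathcomp Require Import ereal exp.
From Stdlib Require Import ClassicalEpsilon.

Set Implicit Arguments.
Unset Strict Implicit.
Unset Printing Implicit Defensive.

Import Order.TTheory GRing.Theory Num.Theory.
Local Open Scope ring_scope.
Local Open Scope sesquilinear_scope.

(* Composite systems A (x) B are represented on dimension m * n with the
   Kronecker product  *t  of mxtens (index (a,b) |-> a * n + b). *)

Definition adj {R : realType} m n (M : 'M[R[i]]_(m, n)) : 'M[R[i]]_(n, m) := M ^t*.

Definition psdmx {R : realType} n (M : 'M[R[i]]_n) : Prop :=
  adj M = M /\ forall v : 'cV[R[i]]_n, 0 <= (adj v *m M *m v) 0 0.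

Definition lemx {R : realType} n (A B : 'M[R[i]]_n) : Prop := psdmx (B - A).

Definition trR {R : realType} n (M : 'M[R[i]]_n) : R := complex.Re (\tr M).

Definition density {R : realType} n (M : 'M[R[i]]_n) : Prop :=
  psdmx M /\ \tr M = 1.
Definition subnormalized {R : realType} n (M : 'M[R[i]]_n) : Prop :=
  psdmx M /\ trR M <= 1.

Definition msqrt {R : realType} n (M : 'M[R[i]]_n) : 'M[R[i]]_n :=
  epsilon (inhabits 0) (fun B : 'M[R[i]]_n => psdmx B /\ B *m B = M).

Definition trnorm {R : realType} n (X : 'M[R[i]]_n) : R :=
  trR (msqrt (adj X *m X)).

Definition Fbar {R : realType} n (rho sig : 'M[R[i]]_n) : R :=
  trnorm (msqrt rho *m msqrt sig) + Num.sqrt ((1 - trR rho) * (1 - trR sig)).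
Definition Pdist {R : realType} n (rho sig : 'M[R[i]]_n) : R :=
  Num.sqrt (1 - Fbar rho sig ^+ 2).

(* H_min(A|B)_{rho|sigma} = max {lambda : 2^{-lambda} I_A (x) sigma_B >= rho_AB}
   (taken as a supremum in the extended reals) *)
Definition Hmin_rel {R : realType} a b (rho : 'M[R[i]]_(a * b)) (sig : 'M[R[i]]_b)
  : \bar R :=
  ereal_sup [set (l%:E)%E | l in
    [set l : R | lemx rho ((((2 : R) `^ (- l))%:C)%C *: ((1%:M : 'M[R[i]]_a) *t sig))]].

Definition Hmin {R : realType} a b (rho : 'M[R[i]]_(a * b)) : \bar R :=
  ereal_sup [set Hmin_rel rho sig | sig in [set sig : 'M[R[i]]_b | density sig]].

Definition Hmin_smooth {R : realType} a b (eps : R) (rho : 'M[R[i]]_(a * b)) : \bar R :=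
  ereal_sup [set Hmin rt | rt in
    [set rt : 'M[R[i]]_(a * b) | subnormalized rt /\ Pdist rho rt <= eps]].

Definition ptrace1 {R : realType} m n (X : 'M[R[i]]_(m * n)) : 'M[R[i]]_n :=
  \matrix_(i, j) \sum_(a < m) X (mxtens_index (a, i)) (mxtens_index (a, j)).

(* (T_{A -> A1} (x) id_E)(X),  A = A1 (x) A2:
   sum_{a1,a2} |a1><a1| (x) (<a1 a2| (x) I_E) X (|a1 a2> (x) I_E) *)
Definition Tmap {R : realType} a1 a2 e (X : 'M[R[i]]_(a1 * a2 * e)) : 'M[R[i]]_(a1 * e) :=
  \matrix_(i, j)
    if (mxtens_unindex i).1 == (mxtens_unindex j).1 then
      \sum_(x2 < a2)
        X (mxtens_index (mxtens_index ((mxtens_unindex i).1, x2), (mxtens_unindex i).2))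
          (mxtens_index (mxtens_index ((mxtens_unindex j).1, x2), (mxtens_unindex j).2))
    else 0.

(* identity relabelling I_{A1 -> K1} (K1 is a copy of A1, |K1| = |A1|) *)
Definition relabel {R : realType} n (X : 'M[R[i]]_n) : 'M[R[i]]_n := X.

Definition Mmeas {R : realType} a1 a2 e (U : 'M[R[i]]_(a1 * a2))
  (X : 'M[R[i]]_(a1 * a2 * e)) : 'M[R[i]]_(a1 * e) :=
  relabel (Tmap ((U *t (1%:M : 'M[R[i]]_e)) *m X *m adj (U *t (1%:M : 'M[R[i]]_e)))).

Definition log2 {R : realType} (x : R) : R := ln x / ln 2.

From HB Require Import structures.
From mathcomp Require Import all_boot all_order all_algebra.
From mathcomp Require Import complex mxtens.
From mathcomp Require Import all_classical all_reals.
From mathcomp Require Import ereal exp.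
From Stdlib Require Import ClassicalEpsilon.
From mathcomp Require Import ring lra.

Set Implicit Arguments.
Unset Strict Implicit.
Unset Printing Implicit Defensive.

Import Order.TTheory GRing.Theory Num.Theory.
Local Open Scope ring_scope.

(* Let tau = I/|K1| (x) rho_E (x) I/L.  The difference rho_{K1EJ} - tau is block
   diagonal in J with blocks (M^j(rho_AE) - I/|K1| (x) rho_E)/L, so its trace norm is
   at most eps.  The Powers-Stormer inequality ||sqrt rho - sqrt tau||_2^2 <=
   ||rho - tau||_1 bounds the fidelity of rho_{K1EJ} and tau below by 1 - eps/2, hence
   their purified distance is at most sqrt eps <= sqrt (2 eps).  Finally
   tau = 2^(-log |K1|) I (x) sigma with the state sigma = rho_E (x) I/L, so
   H_min(K1|EJ)_tau >= log |K1|, and tau is admissible in the smoothing. *)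

Section Kronecker.
Variable K : comPzRingType.

Lemma tensmxBl m n p q (A1 A2 : 'M[K]_(m, n)) (B : 'M[K]_(p, q)) :
  (A1 - A2) *t B = A1 *t B - A2 *t B.
Proof. by apply/matrixP=> i j; rewrite !mxE mulrBl. Qed.

Lemma tensmxZl m n p q c (A : 'M[K]_(m, n)) (B : 'M[K]_(p, q)) :
  (c *: A) *t B = c *: (A *t B).
Proof. by apply/matrixP=> i j; rewrite !mxE mulrA. Qed.

Lemma tensmxZr m n p q c (A : 'M[K]_(m, n)) (B : 'M[K]_(p, q)) :
  A *t (c *: B) = c *: (A *t B).
Proof. by apply/matrixP=> i j; rewrite !mxE mulrCA. Qed.

Lemma tensmx_sumr m n p q I (r : seq I) (P : pred I)
  (A : 'M[K]_(m, n)) (B : I -> 'M[K]_(p, q)) :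
  A *t (\sum_(k <- r | P k) B k) = \sum_(k <- r | P k) (A *t B k).
Proof.
apply/matrixP=> i j; rewrite mxE !summxE mulr_sumr.
by apply: eq_bigr => k _; rewrite mxE.
Qed.

Lemma tensmx11 m n : (1%:M : 'M[K]_m) *t (1%:M : 'M[K]_n) = 1%:M.
Proof.
apply/matrixP=> i j; case: (mxtens_indexP i) => i1 i2; case: (mxtens_indexP j) => j1 j2.
by rewrite tensmxE !mxE -natrM mulnb (inj_eq (can_inj (@mxtens_indexK m n))) xpair_eqE.
Qed.

Lemma castmx_tensmxA m n p (A : 'M[K]_m) (B : 'M[K]_n) (C : 'M[K]_p) :
  castmx (esym (mulnA m n p), esym (mulnA m n p)) ((A *t B) *t C) = A *t (B *t C).
Proof.
have idxA (i1 : 'I_m) (i2 : 'I_n) (i3 : 'I_p) :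
    cast_ord (esym (esym (mulnA m n p))) (mxtens_index (i1, mxtens_index (i2, i3))) =
    mxtens_index (mxtens_index (i1, i2), i3).
  by apply: val_inj => /=; rewrite mulnDl -mulnA addnA.
apply/matrixP=> i j; rewrite castmxE /=.
case: (mxtens_indexP i) => i1 i23; case: (mxtens_indexP i23) => i2 i3.
case: (mxtens_indexP j) => j1 j23; case: (mxtens_indexP j23) => j2 j3.
by rewrite !idxA !tensmxE mulrA.
Qed.

Lemma castmxB n n' (e : n = n') (A B : 'M[K]_n) :
  castmx (e, e) (A - B) = castmx (e, e) A - castmx (e, e) B.
Proof. by case: n' / e; rewrite !castmx_id. Qed.


Lemma sum_mxtens_index m n (F : 'I_(m * n) -> K) :
  \sum_k F k = \sum_(i < m) \sum_(j < n) F (mxtens_index (i, j)).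
Proof.
rewrite pair_big /= (reindex (@mxtens_index m n)) /=; first by apply: eq_bigr => -[].
by exists (@mxtens_unindex m n) => k _; rewrite (mxtens_indexK, mxtens_unindexK).
Qed.

Lemma mxtrace_tens m n (A : 'M[K]_m) (B : 'M[K]_n) :
  \tr (A *t B) = \tr A * \tr B.
Proof. by rewrite /mxtrace mulr_sum; apply: eq_bigr => k _; rewrite mxE. Qed.


Lemma mxtrace_delta n (j : 'I_n) : \tr (delta_mx j j : 'M[K]_n) = 1.
Proof. by rewrite /mxtrace (bigD1 j) //= big1 => [|k /negbTE kj]; rewrite mxE ?kj // !eqxx addr0. Qed.

Lemma sum_delta_mx n : \sum_(j < n) (delta_mx j j : 'M[K]_n) = 1%:M.
Proof.
apply/matrixP=> a b; rewrite summxE !mxE (bigD1 a) //= big1 => [|k /negbTE ka].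
  by rewrite mxE eqxx /= addr0 eq_sym.
by rewrite mxE eq_sym ka.
Qed.

Lemma mulmx_blockdiag m L (A B : 'I_L -> 'M[K]_m) :
  (\sum_j (A j *t delta_mx j j)) *m (\sum_k (B k *t delta_mx k k))
  = \sum_j ((A j *m B j) *t (delta_mx j j : 'M[K]_L)).
Proof.
rewrite mulmx_suml; apply: eq_bigr => j _; rewrite mulmx_sumr (bigD1 j) //= big1.
  by rewrite tensmx_mul mul_delta_mx addr0.
by move=> k kj; rewrite tensmx_mul mul_delta_mx_0 ?tensmx0 // eq_sym.
Qed.

End Kronecker.

Section Adjoint.
Variable R : realType.

Lemma adjE m n (M : 'M[R[i]]_(m, n)) i j : adj M i j = (M j i)^*.
Proof. by rewrite /adj !mxE. Qed.

Lemma adjK m n (M : 'M[R[i]]_(m, n)) : adj (adj M) = M.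
Proof. exact: trmxCK. Qed.

Lemma adjM m n p (A : 'M[R[i]]_(m, n)) (B : 'M[R[i]]_(n, p)) :
  adj (A *m B) = adj B *m adj A.
Proof. by rewrite /adj trmx_mul map_mxM. Qed.

Lemma adjD m n (A B : 'M[R[i]]_(m, n)) : adj (A + B) = adj A + adj B.
Proof. by rewrite /adj raddfD map_mxD. Qed.

Lemma adjB m n (A B : 'M[R[i]]_(m, n)) : adj (A - B) = adj A - adj B.
Proof. by rewrite /adj raddfB map_mxB. Qed.

Lemma adjZ m n c (A : 'M[R[i]]_(m, n)) : adj (c *: A) = c^* *: adj A.
Proof. by rewrite /adj linearZ map_mxZ. Qed.

Lemma adj0 m n : adj (0 : 'M[R[i]]_(m, n)) = 0.
Proof. by rewrite /adj trmx0 map_mx0. Qed.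

Lemma adj1 n : adj (1%:M : 'M[R[i]]_n) = 1%:M.
Proof. by rewrite /adj trmx1 map_mx1. Qed.

Lemma adj_sum m n I (r : seq I) (P : pred I) (F : I -> 'M[R[i]]_(m, n)) :
  adj (\sum_(k <- r | P k) F k) = \sum_(k <- r | P k) adj (F k).
Proof. by rewrite /adj raddf_sum map_mx_sum. Qed.

Lemma adj_tens m n p q (A : 'M[R[i]]_(m, n)) (B : 'M[R[i]]_(p, q)) :
  adj (A *t B) = adj A *t adj B.
Proof. by rewrite /adj trmx_tens map_mxT. Qed.

Lemma adj_delta m n (j : 'I_m) (k : 'I_n) :
  adj (delta_mx j k : 'M[R[i]]_(m, n)) = delta_mx k j.
Proof. by rewrite /adj trmx_delta map_delta_mx. Qed.

Lemma adj_diag_real n (d : 'rV[R[i]]_n) :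
  (forall k, d 0 k \is Num.real) -> adj (diag_mx d) = diag_mx d.
Proof.
move=> d_real; apply/matrixP=> i j; rewrite adjE !mxE eq_sym.
by case: eqP => [->|_]; rewrite ?mulr1n ?conj_Creal ?mulr0n ?rmorph0.
Qed.

Lemma mul_adjmx_unitary n (P : 'M[R[i]]_n) : P \is unitarymx -> adj P *m P = 1%:M.
Proof. by move=> uP; rewrite /adj -invmx_unitary // mulVmx ?unitarymx_unit. Qed.

Lemma mulmx_adj_unitary m n (P : 'M[R[i]]_(m, n)) : P \is unitarymx -> P *m adj P = 1%:M.
Proof. by move/unitarymxP. Qed.

Lemma conj_unitaryK n (P D : 'M[R[i]]_n) :
  P \is unitarymx -> P *m (adj P *m D *m P) *m adj P = D.
Proof. by move=> uP; rewrite !mulmxA mulmx_adj_unitary // mul1mx mulmxtVK. Qed.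

Lemma mxtrace_conj_unitary n (P D : 'M[R[i]]_n) :
  P \is unitarymx -> \tr (adj P *m D *m P) = \tr D.
Proof. by move=> uP; rewrite mxtrace_mulC mulmxA mulmx_adj_unitary // mul1mx. Qed.

End Adjoint.

Section PositiveSemidefinite.
Variable R : realType.

Lemma quadform_ge0 n (w : 'cV[R[i]]_n) : 0 <= (adj w *m w) 0 0.
Proof.
by rewrite mxE; apply: sumr_ge0 => k _; rewrite adjE -normCKC exprn_ge0.
Qed.

Lemma psdmx_herm n (M : 'M[R[i]]_n) : psdmx M -> adj M = M.
Proof. by case. Qed.

Lemma psdmx_adj_mul m n (X : 'M[R[i]]_(m, n)) : psdmx (adj X *m X).
Proof.
split=> [|v]; first by rewrite adjM adjK.
by rewrite mulmxA -adjM -mulmxA quadform_ge0.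
Qed.

Lemma psdmx_conj m n (M : 'M[R[i]]_m) (X : 'M[R[i]]_(m, n)) :
  psdmx M -> psdmx (adj X *m M *m X).
Proof.
case=> hM fM; split=> [|v]; first by rewrite !adjM adjK hM mulmxA.
by have := fM (X *m v); rewrite adjM !mulmxA.
Qed.

Lemma psdmx0 n : psdmx (0 : 'M[R[i]]_n).
Proof. by split=> [|v]; rewrite ?adj0 // mulmx0 mul0mx mxE. Qed.

Lemma psdmxD n (A B : 'M[R[i]]_n) : psdmx A -> psdmx B -> psdmx (A + B).
Proof.
case=> hA fA [hB fB]; split=> [|v]; first by rewrite adjD hA hB.
by rewrite mulmxDr mulmxDl mxE addr_ge0.
Qed.

Lemma psdmx_sum n I (r : seq I) (P : pred I) (F : I -> 'M[R[i]]_n) :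
  (forall k, P k -> psdmx (F k)) -> psdmx (\sum_(k <- r | P k) F k).
Proof.
by move=> psdF; elim/big_rec: _ => [|k X Pk]; [exact: psdmx0 | apply/psdmxD/psdF].
Qed.

Lemma psdmxZ n (c : R[i]) (A : 'M[R[i]]_n) : 0 <= c -> psdmx A -> psdmx (c *: A).
Proof.
move=> c_ge0 [hA fA]; split=> [|v]; first by rewrite adjZ hA conj_Creal ?ger0_real.
by rewrite -scalemxAr -scalemxAl mxE mulr_ge0.
Qed.


Lemma psdmx_entry_ge0 n (M : 'M[R[i]]_n) k : psdmx M -> 0 <= M k k.
Proof.
case=> _ /(_ (delta_mx k 0)).
by rewrite adj_delta -rowE -colE !mxE.
Qed.

Lemma psdmx_conj_entry_ge0 n (Q M : 'M[R[i]]_n) k :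
  psdmx M -> 0 <= (Q *m M *m adj Q) k k.
Proof. by move=> pM; have := psdmx_entry_ge0 k (psdmx_conj (adj Q) pM); rewrite adjK. Qed.

Lemma mxtrace_psd_ge0 n (M : 'M[R[i]]_n) : psdmx M -> 0 <= \tr M.
Proof. by move=> pM; apply: sumr_ge0 => k _; exact: psdmx_entry_ge0. Qed.

Lemma psdmx_diag n (d : 'rV[R[i]]_n) : (forall k, 0 <= d 0 k) -> psdmx (diag_mx d).
Proof.
move=> d_ge0; set s := \row_k sqrtC (d 0 k).
suff -> : diag_mx d = adj (diag_mx s) *m diag_mx s by exact: psdmx_adj_mul.
rewrite adj_diag_real => [|k]; last by rewrite mxE sqrtC_real.
by rewrite mulmx_diag; congr diag_mx; apply/rowP => k; rewrite !mxE -expr2 sqrtCK.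
Qed.

Lemma psdmx1 n : psdmx (1%:M : 'M[R[i]]_n).
Proof. by rewrite -[1%:M]mul1mx -{1}adj1; exact: psdmx_adj_mul. Qed.

Lemma psdmx_delta n (j : 'I_n) : psdmx (delta_mx j j : 'M[R[i]]_n).
Proof. by rewrite -(@mul_delta_mx _ n n n j j j) -{1}adj_delta; exact: psdmx_adj_mul. Qed.

End PositiveSemidefinite.

Section SquareRoot.
Variable R : realType.

Lemma hermitian_spectral n (M : 'M[R[i]]_n) : adj M = M ->
  exists P (d : 'rV[R[i]]_n),
    [/\ P \is unitarymx, M = adj P *m diag_mx d *m P & forall k, d 0 k \is Num.real].
Proof.
move=> hM; have nM : M \is normalmx by apply/normalmxP; rewrite -/(adj M) hM.
have /orthomx_spectralP := nM; set P := spectralmx M; set d := spectral_diag M.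
have uP : P \is unitarymx by exact: spectral_unitarymx.
rewrite invmx_unitary // -/(adj P) => eM; exists P, d; split=> // k.
have eD : diag_mx d = P *m M *m adj P by rewrite eM conj_unitaryK.
have hD : adj (diag_mx d) = diag_mx d by rewrite eD !adjM adjK hM mulmxA.
by have := congr1 (fun X : 'M_n => X k k) hD; rewrite /= adjE !mxE eqxx => /CrealP.
Qed.

Lemma psdmx_spectral n (M : 'M[R[i]]_n) : psdmx M ->
  exists P (d : 'rV[R[i]]_n),
    [/\ P \is unitarymx, M = adj P *m diag_mx d *m P & forall k, 0 <= d 0 k].
Proof.
move=> pM; have [P [d [uP eM _]]] := hermitian_spectral (psdmx_herm pM).
exists P, d; split=> // k.
by have := psdmx_conj_entry_ge0 P k pM; rewrite eM conj_unitaryK // mxE eqxx.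
Qed.

Lemma psdmx_sqrt_exists n (M : 'M[R[i]]_n) : psdmx M ->
  exists B, psdmx B /\ B *m B = M.
Proof.
move=> pM; have [P [d [uP -> d_ge0]]] := psdmx_spectral pM.
set s := \row_k sqrtC (d 0 k).
exists (adj P *m diag_mx s *m P); split.
  by apply/psdmx_conj/psdmx_diag => k; rewrite mxE sqrtC_ge0.
rewrite -!mulmxA; congr (_ *m _).
rewrite (mulmxA P) mulmx_adj_unitary // mul1mx mulmxA mulmx_diag.
by congr (diag_mx _ *m _); apply/rowP => k; rewrite !mxE -expr2 sqrtCK.
Qed.

(* With A - B = Q^* diag(mu) Q, each eigenvalue mu_k of A - B controls the k-th
   diagonal entry of A^2 - B^2 in the same basis; this yields both the uniqueness of
   positive square roots and the Powers-Stormer inequality. *)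
Section DiagonalizedDifference.
Variables (n : nat) (A B Q : 'M[R[i]]_n) (mu : 'rV[R[i]]_n).
Hypotheses (uQ : Q \is unitarymx) (eAB : A - B = adj Q *m diag_mx mu *m Q).

Let A' := Q *m A *m adj Q.
Let B' := Q *m B *m adj Q.

Let A'E : A' = B' + diag_mx mu.
Proof. by rewrite /A' /B' -(conj_unitaryK (diag_mx mu) uQ) -eAB mulmxBr mulmxBl addrC subrK. Qed.

Lemma conj_diff_sqr_entry k :
  (Q *m (A *m A - B *m B) *m adj Q) k k = mu 0 k * (A' k k + B' k k).
Proof.
have conjM X Y : Q *m (X *m Y) *m adj Q = (Q *m X *m adj Q) *m (Q *m Y *m adj Q).
  by rewrite !mulmxA mulmxKtV.
rewrite mulmxBr mulmxBl !conjM -/A' -/B' A'E mulmxDl !mulmxDr.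
by rewrite mulmx_diag mul_mx_diag mul_diag_mx !mxE eqxx /=; ring.
Qed.

Lemma norm_diff_eigen_le k : psdmx A -> psdmx B -> `|mu 0 k| <= A' k k + B' k k.
Proof.
move=> pA pB; have a_ge0 := psdmx_conj_entry_ge0 Q k pA.
have b_ge0 := psdmx_conj_entry_ge0 Q k pB.
have -> : mu 0 k = A' k k - B' k k by rewrite A'E mxE addrAC subrr add0r mxE eqxx.
rewrite -/A' -/B' in a_ge0 b_ge0; rewrite real_ler_norml ?rpredB ?ger0_real //.
rewrite opprD lerD2r lerD2l.
by rewrite !(le_trans _ a_ge0, le_trans _ b_ge0) ?oppr_le0.
Qed.

End DiagonalizedDifference.

Lemma psdmx_sqrt_unique n (B1 B2 : 'M[R[i]]_n) :
  psdmx B1 -> psdmx B2 -> B1 *m B1 = B2 *m B2 -> B1 = B2.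
Proof.
move=> p1 p2 e12.
have hB : adj (B1 - B2) = B1 - B2 by rewrite adjB !psdmx_herm.
have [Q [d [uQ eB _]]] := hermitian_spectral hB.
suff d0 : d = 0 by apply/eqP; rewrite -subr_eq0 eB d0 linear0 mulmx0 mul0mx.
apply/rowP => k; have := conj_diff_sqr_entry uQ eB k.
rewrite e12 subrr mulmx0 mul0mx mxE => /esym/eqP; rewrite mulf_eq0 => /orP[/eqP->|/eqP s0].
  by rewrite mxE.
by apply/eqP; rewrite mxE -normr_le0 -s0 norm_diff_eigen_le.
Qed.

Lemma msqrtP n (M : 'M[R[i]]_n) : psdmx M -> psdmx (msqrt M) /\ msqrt M *m msqrt M = M.
Proof. by move=> /psdmx_sqrt_exists; apply: epsilon_spec. Qed.

Lemma msqrt_unique n (M B : 'M[R[i]]_n) : psdmx B -> B *m B = M -> msqrt M = B.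
Proof.
move=> pB eB; have pM : psdmx M by rewrite -eB -{1}(psdmx_herm pB); exact: psdmx_adj_mul.
by have [p1 e1] := msqrtP pM; apply: psdmx_sqrt_unique; rewrite ?e1.
Qed.

Lemma psdmx_tens m n (A : 'M[R[i]]_m) (B : 'M[R[i]]_n) :
  psdmx A -> psdmx B -> psdmx (A *t B).
Proof.
move=> /msqrtP[pA eA] /msqrtP[pB eB].
rewrite -eA -eB -tensmx_mul -{1}(psdmx_herm pA) -{1}(psdmx_herm pB) -adj_tens.
exact: psdmx_adj_mul.
Qed.

End SquareRoot.


Section TraceNorm.
Variable R : realType.

Lemma ler_Re (a b : R[i]) : a <= b -> complex.Re a <= complex.Re b.
Proof. by rewrite lecE => /andP[]. Qed.

Lemma Re_le_norm (z : R[i]) : complex.Re z <= complex.Re `|z|.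
Proof.
rewrite normc_def /=; apply: (le_trans (ler_norm _)).
by rewrite -sqrtr_sqr ler_wsqrtr // lerDl sqr_ge0.
Qed.

Lemma Re_realM (c : R) (z : R[i]) : complex.Re ((c%:C)%C * z) = c * complex.Re z.
Proof. by case: z => a b; rewrite /= mul0r subr0. Qed.

Lemma trnorm_ge0 n (X : 'M[R[i]]_n) : 0 <= trnorm X.
Proof.
have [pS _] := msqrtP (psdmx_adj_mul X).
by have := ler_Re (mxtrace_psd_ge0 pS).
Qed.

Lemma trnorm_castmx n n' (e : n = n') (A : 'M[R[i]]_n) :
  trnorm (castmx (e, e) A) = trnorm A.
Proof. by case: n' / e; rewrite castmx_id. Qed.

Lemma trnormZ n (c : R) (X : 'M[R[i]]_n) :
  0 <= c -> trnorm ((c%:C)%C *: X) = c * trnorm X.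
Proof.
move=> c_ge0; have [pS eS] := msqrtP (psdmx_adj_mul X).
rewrite /trnorm (@msqrt_unique _ _ _ ((c%:C)%C *: msqrt (adj X *m X))).
- by rewrite /trR mxtraceZ Re_realM.
- by apply: psdmxZ; rewrite ?ler0c.
by rewrite adjZ conj_Creal ?complex_real // -!scalemxAl -!scalemxAr !scalerA eS.
Qed.

Lemma trnorm_spectral n (X Q : 'M[R[i]]_n) (g : 'rV[R[i]]_n) :
  Q \is unitarymx -> (forall k, 0 <= g 0 k) -> adj X *m X = adj Q *m diag_mx g *m Q ->
  trnorm X = complex.Re (\sum_k sqrtC (g 0 k)).
Proof.
move=> uQ g_ge0 eXX; set s := \row_k sqrtC (g 0 k).
rewrite /trnorm (@msqrt_unique _ _ _ (adj Q *m diag_mx s *m Q)).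
- by rewrite /trR mxtrace_conj_unitary // mxtrace_diag; under eq_bigr do rewrite mxE.
- by apply/psdmx_conj/psdmx_diag => k; rewrite mxE sqrtC_ge0.
rewrite eXX !mulmxA mulmxtVK // -(mulmxA (adj Q)) mulmx_diag.
by congr (_ *m diag_mx _ *m _); apply/rowP => k; rewrite !mxE -expr2 sqrtCK.
Qed.

Lemma trnorm_hermitian n (Y P : 'M[R[i]]_n) (d : 'rV[R[i]]_n) :
  P \is unitarymx -> Y = adj P *m diag_mx d *m P -> (forall k, d 0 k \is Num.real) ->
  trnorm Y = complex.Re (\sum_k `|d 0 k|).
Proof.
move=> uP eY d_real; have hY : adj Y = Y by rewrite eY !adjM adjK adj_diag_real // mulmxA.
rewrite (@trnorm_spectral _ _ P (\row_k `|d 0 k| ^+ 2)) //.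
- by congr complex.Re; apply: eq_bigr => k _; rewrite mxE (sqrCK (normr_ge0 _)).
- by move=> k; rewrite mxE exprn_ge0.
rewrite hY eY !mulmxA mulmxtVK // -(mulmxA (adj P)) mulmx_diag.
by congr (_ *m diag_mx _ *m _); apply/rowP => k; rewrite !mxE real_normK // expr2.
Qed.

Lemma unitarymx_col_norm n (W : 'M[R[i]]_n) l :
  W \is unitarymx -> \sum_k `|W k l| ^+ 2 = 1.
Proof.
move=> /mul_adjmx_unitary/(congr1 (fun M : 'M_n => M l l)); rewrite /= !mxE eqxx mulr1n => <-.
by apply: eq_bigr => k _; rewrite adjE normCKC.
Qed.

Lemma sum_norm_conj_diag_le n (Y P Q : 'M[R[i]]_n) (d : 'rV[R[i]]_n) :
  P \is unitarymx -> Q \is unitarymx -> Y = adj P *m diag_mx d *m P ->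
  \sum_k `|(Q *m Y *m adj Q) k k| <= \sum_k `|d 0 k|.
Proof.
move=> uP uQ eY; set W := Q *m adj P.
have uW : W \is unitarymx by rewrite mul_unitarymx // trmxC_unitary.
have -> : Q *m Y *m adj Q = W *m diag_mx d *m adj W by rewrite eY adjM adjK !mulmxA.
have entryE k : (W *m diag_mx d *m adj W) k k = \sum_l d 0 l * `|W k l| ^+ 2.
  rewrite mul_mx_diag mxE; apply: eq_bigr => l _.
  by rewrite [X in X * _]mxE adjE normCK mulrAC mulrC.
apply: (@le_trans _ _ (\sum_k \sum_l `|d 0 l| * `|W k l| ^+ 2)).
  apply: ler_sum => k _; rewrite entryE; apply: (le_trans (ler_norm_sum _ _ _)).
  by apply: ler_sum => l _; rewrite normrM [`|_ ^+ 2|]ger0_norm ?exprn_ge0.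
rewrite exchange_big /=; apply: ler_sum => l _.
by rewrite -mulr_sumr unitarymx_col_norm // mulr1.
Qed.

Lemma Re_tr_le_trnorm n (X : 'M[R[i]]_n) : complex.Re (\tr X) <= trnorm X.
Proof.
have [Q [g [uQ eXX g_ge0]]] := psdmx_spectral (psdmx_adj_mul X).
rewrite (trnorm_spectral uQ g_ge0 eXX); set Z := Q *m X *m adj Q.
have eZ : adj Z *m Z = diag_mx g.
  by rewrite /Z !adjM adjK !mulmxA mulmxKtV // -(mulmxA Q (adj X)) eXX conj_unitaryK.
have -> : \tr X = \tr Z by rewrite /Z mxtrace_mulC mulmxA mul_adjmx_unitary // mul1mx.
have Zk k : `|Z k k| <= sqrtC (g 0 k).
  have Zk2 : `|Z k k| ^+ 2 <= g 0 k.
    have := congr1 (fun M : 'M_n => M k k) eZ.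
    rewrite /= [diag_mx _ _ _]mxE eqxx mulr1n [(_ *m _) _ _]mxE => <-.
    rewrite (bigD1 k) //= adjE -normCKC lerDl; apply: sumr_ge0 => j _.
    by rewrite adjE -normCKC exprn_ge0.
  by rewrite -(sqrCK (normr_ge0 (Z k k))) ler_sqrtC ?nnegrE ?exprn_ge0.
apply: (le_trans (Re_le_norm _)); apply/ler_Re.
by apply: (le_trans (ler_norm_sum _ _ _)); apply: ler_sum => k _; exact: Zk.
Qed.

Lemma trnorm_blockdiag m L (D : 'I_L -> 'M[R[i]]_m) :
  trnorm (\sum_j (D j *t delta_mx j j)) = \sum_j trnorm (D j).
Proof.
set S := \sum_j (msqrt (adj (D j) *m D j) *t (delta_mx j j : 'M_L)).
rewrite /trnorm (@msqrt_unique _ _ _ S).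
- rewrite /trR [\tr _]raddf_sum raddf_sum /=; apply: eq_bigr => j _.
  by rewrite mxtrace_tens mxtrace_delta mulr1.
- apply: psdmx_sum => j _; apply: psdmx_tens; last exact: psdmx_delta.
  by case: (msqrtP (psdmx_adj_mul (D j))).
rewrite adj_sum; under eq_bigr do rewrite adj_tens adj_delta.
rewrite !mulmx_blockdiag; apply: eq_bigr => j _.
by case: (msqrtP (psdmx_adj_mul (D j))) => _ ->.
Qed.

End TraceNorm.

Section Fidelity.
Variable R : realType.

Lemma powers_stormer n (rho tau : 'M[R[i]]_n) : psdmx rho -> psdmx tau ->
  trR ((msqrt rho - msqrt tau) *m (msqrt rho - msqrt tau)) <= trnorm (rho - tau).
Proof.
move=> pr pt; have [pA eA] := msqrtP pr; have [pB eB] := msqrtP pt.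
set A := msqrt rho in pA eA *; set B := msqrt tau in pB eB *.
have hAB : adj (A - B) = A - B by rewrite adjB !psdmx_herm.
have [Q [mu [uQ eAB mu_real]]] := hermitian_spectral hAB.
have hD : adj (rho - tau) = rho - tau by rewrite adjB !psdmx_herm.
have [P [d [uP eD d_real]]] := hermitian_spectral hD.
have -> : (A - B) *m (A - B) = adj Q *m diag_mx (\row_k mu 0 k ^+ 2) *m Q.
  rewrite eAB !mulmxA mulmxtVK // -(mulmxA (adj Q)) mulmx_diag.
  by congr (_ *m diag_mx _ *m _); apply/rowP => k; rewrite !mxE expr2.
rewrite /trR mxtrace_conj_unitary // mxtrace_diag (trnorm_hermitian uP eD d_real).
apply/ler_Re/(le_trans _ (sum_norm_conj_diag_le uP uQ eD)); apply: ler_sum => k _.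
rewrite mxE -eA -eB (conj_diff_sqr_entry uQ eAB) normrM -(real_normK (mu_real k)) expr2.
have mu_le := norm_diff_eigen_le uQ eAB k pA pB.
by apply: ler_wpM2l => //; rewrite [`|_ + _|]ger0_norm // (le_trans _ mu_le).
Qed.

Lemma Pdist_le_sqrt_trnorm n (rho tau : 'M[R[i]]_n) : density rho -> density tau ->
  Pdist rho tau <= Num.sqrt (trnorm (rho - tau)).
Proof.
move=> [pr tr1] [pt tt1]; have := powers_stormer pr pt.
have [_ eA] := msqrtP pr; have [_ eB] := msqrtP pt.
set A := msqrt rho in eA *; set B := msqrt tau in eB *.
rewrite /trR mulmxBl !mulmxBr eA eB !raddfB /= (mxtrace_mulC B A) tr1 tt1 /= => ps.
have ReF := Re_tr_le_trnorm (A *m B).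
have t_ge0 := trnorm_ge0 (rho - tau).
have s_ge0 : 0 <= Num.sqrt ((1 - trR rho) * (1 - trR tau)) by exact: sqrtr_ge0.
rewrite /Pdist /Fbar -/A -/B ler_wsqrtr //.
set F := trnorm (A *m B) + _; set t := trnorm (rho - tau) in ps t_ge0 *.
have lbF : 1 - t / 2 <= F by rewrite /F; lra.
have F_ge0 : 0 <= F by rewrite /F addr_ge0 // trnorm_ge0.
have [lb_ge0 | lb_lt0] := lerP 0 (1 - t / 2); last by nra.
have : (1 - t / 2) ^+ 2 <= F ^+ 2 by rewrite ler_pXn2r.
by nra.
Qed.

End Fidelity.

Section Channels.
Variable R : realType.

Definition selmx p q (f : 'I_q -> 'I_p) (P : pred 'I_q) : 'M[R[i]]_(p, q) :=
  \matrix_(a, b) (P b && (a == f b))%:R.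

Lemma selmx_conj_entry p q (f : 'I_q -> 'I_p) (P : pred 'I_q) (X : 'M[R[i]]_p) i j :
  (adj (selmx f P) *m X *m selmx f P) i j = (P i && P j)%:R * X (f i) (f j).
Proof.
have rowE b : (adj (selmx f P) *m X) i b = (P i)%:R * X (f i) b.
  rewrite mxE (bigD1 (f i)) //= big1 => [|a /negbTE ne].
    by rewrite adjE mxE eqxx andbT conjC_nat addr0.
  by rewrite adjE mxE ne andbF conjC_nat mul0r.
rewrite mxE (bigD1 (f j)) //= big1 => [|b /negbTE ne]; last first.
  by rewrite [selmx _ _ _ _]mxE ne andbF mulr0.
by rewrite rowE mxE eqxx andbT addr0 -mulnb natrM mulrAC.
Qed.

(* The Kraus operators |a1 x2><a1| (x) I_E of T_{A -> A1}. *)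
Definition Tmap_kraus a1 a2 e (a : 'I_a1) (x2 : 'I_a2) : 'M[R[i]]_(a1 * a2 * e, a1 * e) :=
  selmx (fun q => mxtens_index (mxtens_index (a, x2), (mxtens_unindex q).2))
        (fun q => (mxtens_unindex q).1 == a).

Lemma Tmap_krausE a1 a2 e (X : 'M[R[i]]_(a1 * a2 * e)) :
  Tmap X = \sum_(a < a1) \sum_(x2 < a2) adj (Tmap_kraus e a x2) *m X *m Tmap_kraus e a x2.
Proof.
apply/matrixP => i j; rewrite /Tmap_kraus !mxE summxE.
under [RHS]eq_bigr => a _ do rewrite summxE.
under [RHS]eq_bigr => a _ do under eq_bigr => x2 _ do rewrite selmx_conj_entry.
case: eqP => [eij|nij].
  rewrite [RHS](bigD1 (mxtens_unindex i).1) // [X in _ = _ + X]big1 => [|a /negbTE na].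
    by rewrite addr0; apply: eq_bigr => x2 _; rewrite eqxx -eij eqxx mul1r.
  by apply: big1 => x2 _; rewrite [_ == a]eq_sym na mul0r.
rewrite big1 // => a _; apply: big1 => x2 _.
by case: eqP => [ea|]; case: eqP => [eb|]; rewrite ?mul0r //; case: nij; rewrite ea eb.
Qed.

Lemma psdmx_Tmap a1 a2 e (X : 'M[R[i]]_(a1 * a2 * e)) : psdmx X -> psdmx (Tmap X).
Proof.
by move=> pX; rewrite Tmap_krausE; do 2!apply: psdmx_sum => ? _; exact: psdmx_conj.
Qed.

Lemma mxtrace_Tmap a1 a2 e (X : 'M[R[i]]_(a1 * a2 * e)) : \tr (Tmap X) = \tr X.
Proof.
rewrite /mxtrace sum_mxtens_index [RHS]sum_mxtens_index sum_mxtens_index.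
apply: eq_bigr => a _; rewrite exchange_big /=; apply: eq_bigr => c _.
by rewrite mxE mxtens_indexK eqxx.
Qed.

Definition ptrace1_kraus m n (a : 'I_m) : 'M[R[i]]_(m * n, n) :=
  selmx (fun q => mxtens_index (a, q)) predT.

Lemma ptrace1_krausE m n (X : 'M[R[i]]_(m * n)) :
  ptrace1 X = \sum_(a < m) adj (ptrace1_kraus n a) *m X *m ptrace1_kraus n a.
Proof.
apply/matrixP => i j; rewrite /ptrace1_kraus !mxE summxE; apply: eq_bigr => a _.
by rewrite selmx_conj_entry mul1r.
Qed.

Lemma psdmx_ptrace1 m n (X : 'M[R[i]]_(m * n)) : psdmx X -> psdmx (ptrace1 X).
Proof. by move=> pX; rewrite ptrace1_krausE; apply: psdmx_sum => a _; exact: psdmx_conj. Qed.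

Lemma mxtrace_ptrace1 m n (X : 'M[R[i]]_(m * n)) : \tr (ptrace1 X) = \tr X.
Proof.
by rewrite /mxtrace [RHS]sum_mxtens_index exchange_big; apply: eq_bigr => k _; rewrite mxE.
Qed.

Lemma density_ptrace1 m n (X : 'M[R[i]]_(m * n)) : density X -> density (ptrace1 X).
Proof. by case=> pX tX; split; [exact: psdmx_ptrace1 | rewrite mxtrace_ptrace1]. Qed.

Lemma density_Mmeas a1 a2 e (U : 'M[R[i]]_(a1 * a2)) (X : 'M[R[i]]_(a1 * a2 * e)) :
  U \is unitarymx -> density X -> density (Mmeas U X).
Proof.
move=> uU [pX tX]; split; rewrite /Mmeas /relabel.
  by apply: psdmx_Tmap; rewrite -{1}(adjK (U *t 1%:M)); exact: psdmx_conj.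
rewrite mxtrace_Tmap mxtrace_mulC mulmxA adj_tens adj1 tensmx_mul mul_adjmx_unitary //.
by rewrite mul1mx tensmx11 mul1mx.
Qed.

End Channels.

Section States.
Variable R : realType.

Lemma density_dim_gt0 n (M : 'M[R[i]]_n) : density M -> (0 < n)%N.
Proof.
case: n M => [M [_]|//]; rewrite /mxtrace big_ord0 => /eqP.
by rewrite eq_sym oner_eq0.
Qed.

Lemma density_castmx n n' (e : n = n') (M : 'M[R[i]]_n) :
  density M -> density (castmx (e, e) M).
Proof. by case: n' / e; rewrite castmx_id. Qed.

Lemma density_tens m n (A : 'M[R[i]]_m) (B : 'M[R[i]]_n) :
  density A -> density B -> density (A *t B).
Proof. by case=> pA tA [pB tB]; split; [exact: psdmx_tens | rewrite mxtrace_tens tA tB mulr1]. Qed.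

Lemma density_maxmixed n : (0 < n)%N -> density (((n%:R^-1 : R)%:C)%C *: (1%:M : 'M[R[i]]_n)).
Proof.
move=> n_gt0; split; first by apply: psdmxZ; rewrite ?ler0c ?invr_ge0 //; exact: psdmx1.
rewrite mxtraceZ mxtrace1 -(rmorph_nat (real_complex R)) -rmorphM /=.
by rewrite mulVf ?pnatr_eq0 -?lt0n.
Qed.

Lemma density_subnormalized n (M : 'M[R[i]]_n) : density M -> subnormalized M.
Proof. by case=> pM tM; split; rewrite // /trR tM. Qed.

Definition cq_state n L (X : 'I_L -> 'M[R[i]]_n) : 'M[R[i]]_(n * L) :=
  (((L%:R^-1 : R)%:C)%C *: \sum_(j < L) (X j *t delta_mx j j)).

Lemma density_cq_state n L (X : 'I_L -> 'M[R[i]]_n) :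
  (0 < L)%N -> (forall j, density (X j)) -> density (cq_state X).
Proof.
move=> L_gt0 dX; split.
  apply: psdmxZ; first by rewrite ler0c invr_ge0.
  by apply: psdmx_sum => j _; apply: psdmx_tens; [case: (dX j) | exact: psdmx_delta].
rewrite mxtraceZ raddf_sum /= (eq_bigr (fun=> 1)) => [|j _]; last first.
  by rewrite mxtrace_tens mxtrace_delta mulr1; case: (dX j).
have [_] := density_maxmixed L_gt0.
by rewrite sumr_const card_ord mxtraceZ mxtrace1.
Qed.

Lemma cq_state_const n L (Y : 'M[R[i]]_n) :
  cq_state (fun _ : 'I_L => Y) = Y *t (((L%:R^-1 : R)%:C)%C *: 1%:M).
Proof. by rewrite /cq_state -tensmx_sumr sum_delta_mx tensmxZr. Qed.

Lemma trnorm_cq_stateB n L (X Y : 'I_L -> 'M[R[i]]_n) :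
  trnorm (cq_state X - cq_state Y) = L%:R^-1 * \sum_j trnorm (X j - Y j).
Proof.
rewrite /cq_state -scalerBr -sumrB trnormZ ?invr_ge0 // -trnorm_blockdiag.
by congr (_ * trnorm _); apply: eq_bigr => j _; rewrite tensmxBl.
Qed.

End States.

Lemma pow2_Nlog2 (R : realType) (a : R) : 0 < a -> (2 : R) `^ (- log2 a) = a^-1.
Proof.
move=> a_gt0; rewrite powRN /powR pnatr_eq0 /= /log2 mulfVK ?lnK //.
by rewrite gt_eqF // ln_gt0 // ltr1n.
Qed.

Lemma Hmin_smooth_ge (R : realType) a b (eps l : R)
    (rho tau : 'M[R[i]]_(a * b)) (sigma : 'M[R[i]]_b) :
  subnormalized tau -> Pdist rho tau <= eps -> density sigma ->
  lemx tau ((((2 : R) `^ (- l))%:C)%C *: (1%:M *t sigma)) ->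
  (l%:E <= Hmin_smooth eps rho)%E.
Proof.
move=> tau_sub tau_near sigma_d tau_le.
apply: (@le_trans _ _ (Hmin_rel tau sigma)); first by apply: ereal_sup_ubound; exists l.
apply: (@le_trans _ _ (Hmin tau)); first by apply: ereal_sup_ubound; exists sigma.
by apply: ereal_sup_ubound; exists tau.
Qed.

Unset Implicit Arguments.

Theorem lemma10 (R : realType) (a1 a2 e L : nat)
  (rho : 'M[R[i]]_(a1 * a2 * e)) (U : 'I_L -> 'M[R[i]]_(a1 * a2)) (eps : R) :
  (0 < L)%N ->
  density rho ->
  (forall j, U j \is unitarymx) ->
  (L%:R)^-1 * \sum_(j < L)
      trnorm (Mmeas (U j) rho
              - ((((a1%:R)^-1 : R)%:C)%C *: (1%:M : 'M[R[i]]_a1)) *t ptrace1 rho)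
    <= eps ->
  ((log2 (a1%:R : R))%:E <=
     Hmin_smooth (Num.sqrt (2 * eps))
       (castmx (esym (mulnA a1 e L), esym (mulnA a1 e L))
          ((((L%:R)^-1 : R)%:C)%C *: \sum_(j < L) (Mmeas (U j) rho *t delta_mx j j))))%E.
Proof.
move=> L_gt0 rho_d uU dist.
have a1_gt0 : (0 < a1)%N by have := density_dim_gt0 rho_d; rewrite !muln_gt0 => /andP[/andP[]].
set mixA := _ *: (1%:M : 'M_a1) in dist.
pose mixL := (((L%:R)^-1 : R)%:C)%C *: (1%:M : 'M[R[i]]_L).
set sigma := ptrace1 rho *t mixL.
have sigma_d : density sigma.
  by apply: density_tens; [exact: density_ptrace1 | exact: density_maxmixed].
have tau_d : density (mixA *t sigma) by apply: density_tens => //; exact: density_maxmixed.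
have tauE : mixA *t sigma = castmx (esym (mulnA a1 e L), esym (mulnA a1 e L))
    (cq_state (fun _ : 'I_L => mixA *t ptrace1 rho)) by rewrite cq_state_const castmx_tensmxA.
apply: (Hmin_smooth_ge (density_subnormalized tau_d) _ sigma_d); last first.
  by rewrite pow2_Nlog2 ?ltr0n // -tensmxZl /lemx subrr; exact: psdmx0.
rewrite -/(cq_state _).
apply: (le_trans (Pdist_le_sqrt_trnorm _ tau_d)).
  by apply/density_castmx/density_cq_state => // j; exact: density_Mmeas.
rewrite tauE -castmxB trnorm_castmx.
have := trnorm_ge0 (cq_state (fun j => Mmeas (U j) rho) - cq_state (fun _ => mixA *t ptrace1 rho)).
by rewrite trnorm_cq_stateB => t_ge0; rewrite ler_wsqrtr //; lra.
Qed.
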